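(* Two elements $a,b\in C\ell_{1,2}$, neither of which lies in the center $\mathbb{R}+\mathbb{R}e_7$ of $C\ell_{1,2}$, are similar if and only if $\mathrm{Cre}(a)=\mathrm{Cre}(b)$, $N(a)=N(b)$ and $T(a)=T(b)$.
   Context: $C\ell_{1,2}$ is the real Clifford algebra generated by $i_1,i_2,i_3$ with $i_1^2=1$, $i_2^2=i_3^2=-1$ and $i_ti_m=-i_mi_t$ for $t\neq m$, with real basis $e_0=1$, $e_1=i_1$, $e_2=i_2$, $e_3=i_1i_2$, $e_4=i_3$, $e_5=i_1i_3$, $e_6=i_2i_3$, $e_7=i_1i_2i_3$; its center is $\mathbb{R}+\mathbb{R}e_7$. For $a=\sum_{t=0}^7 a_te_t$ ($a_t\in\mathbb{R}$) define: $\mathrm{Cre}(a)=a_0+a_7e_7$; $N(a)=a_0^2-a_1^2+a_2^2-a_3^2+a_4^2-a_5^2+a_6^2-a_7^2$; $T(a)=a_0a_7+a_2a_5-a_1a_6-a_3a_4$; $P(a)=N(a)^2+4T(a)^2$. Let $Z(C\ell_{1,2})=\{a\in C\ell_{1,2}:P(a)=0\}$. Two elements $a,b\in C\ell_{1,2}$ are called similar if there exists $q\in C\ell_{1,2}\setminus Z(C\ell_{1,2})$ with $qa=bq$. *)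

From Stdlib Require Import Reals Lra Psatz.
Open Scope R_scope.

(* Elements of the real Clifford algebra Cl_{1,2}, written in the real basis
   e0 = 1, e1 = i1, e2 = i2, e3 = i1 i2, e4 = i3, e5 = i1 i3, e6 = i2 i3,
   e7 = i1 i2 i3, as a = sum_t a_t e_t with coordinates c0 .. c7. *)
Record Cl12 : Type := mkCl {
  c0 : R; c1 : R; c2 : R; c3 : R; c4 : R; c5 : R; c6 : R; c7 : R }.

(* Clifford product, determined by i1^2 = 1, i2^2 = i3^2 = -1,
   i_t i_m = - i_m i_t (t <> m), extended bilinearly. *)
Definition clmul (x y : Cl12) : Cl12 :=
  mkCl
    ( x.(c0) * y.(c0) + x.(c1) * y.(c1) - x.(c2) * y.(c2) + x.(c3) * y.(c3) - x.(c4) * y.(c4) + x.(c5) * y.(c5) - x.(c6) * y.(c6) - x.(c7) * y.(c7))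
    ( x.(c0) * y.(c1) + x.(c1) * y.(c0) + x.(c2) * y.(c3) - x.(c3) * y.(c2) + x.(c4) * y.(c5) - x.(c5) * y.(c4) - x.(c6) * y.(c7) - x.(c7) * y.(c6))
    ( x.(c0) * y.(c2) + x.(c1) * y.(c3) + x.(c2) * y.(c0) - x.(c3) * y.(c1) + x.(c4) * y.(c6) - x.(c5) * y.(c7) - x.(c6) * y.(c4) - x.(c7) * y.(c5))
    ( x.(c0) * y.(c3) + x.(c1) * y.(c2) - x.(c2) * y.(c1) + x.(c3) * y.(c0) - x.(c4) * y.(c7) + x.(c5) * y.(c6) - x.(c6) * y.(c5) - x.(c7) * y.(c4))
    ( x.(c0) * y.(c4) + x.(c1) * y.(c5) - x.(c2) * y.(c6) + x.(c3) * y.(c7) + x.(c4) * y.(c0) - x.(c5) * y.(c1) + x.(c6) * y.(c2) + x.(c7) * y.(c3))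
    ( x.(c0) * y.(c5) + x.(c1) * y.(c4) + x.(c2) * y.(c7) - x.(c3) * y.(c6) - x.(c4) * y.(c1) + x.(c5) * y.(c0) + x.(c6) * y.(c3) + x.(c7) * y.(c2))
    ( x.(c0) * y.(c6) + x.(c1) * y.(c7) + x.(c2) * y.(c4) - x.(c3) * y.(c5) - x.(c4) * y.(c2) + x.(c5) * y.(c3) + x.(c6) * y.(c0) + x.(c7) * y.(c1))
    ( x.(c0) * y.(c7) + x.(c1) * y.(c6) - x.(c2) * y.(c5) + x.(c3) * y.(c4) + x.(c4) * y.(c3) - x.(c5) * y.(c2) + x.(c6) * y.(c1) + x.(c7) * y.(c0))
.

Definition cladd (x y : Cl12) : Cl12 :=
  mkCl (x.(c0) + y.(c0)) (x.(c1) + y.(c1)) (x.(c2) + y.(c2)) (x.(c3) + y.(c3))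
       (x.(c4) + y.(c4)) (x.(c5) + y.(c5)) (x.(c6) + y.(c6)) (x.(c7) + y.(c7)).

Definition clscale (r : R) (x : Cl12) : Cl12 :=
  mkCl (r * x.(c0)) (r * x.(c1)) (r * x.(c2)) (r * x.(c3))
       (r * x.(c4)) (r * x.(c5)) (r * x.(c6)) (r * x.(c7)).

Definition e0 : Cl12 := mkCl 1 0 0 0 0 0 0 0.
Definition i1 : Cl12 := mkCl 0 1 0 0 0 0 0 0.
Definition i2 : Cl12 := mkCl 0 0 1 0 0 0 0 0.
Definition i3 : Cl12 := mkCl 0 0 0 0 1 0 0 0.
Definition e7 : Cl12 := mkCl 0 0 0 0 0 0 0 1.
Definition clneg (x : Cl12) : Cl12 := clscale (-1) x.

Lemma i1_sq : clmul i1 i1 = e0.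
Proof. unfold clmul, i1, e0; simpl; f_equal; ring. Qed.
Lemma i2_sq : clmul i2 i2 = clneg e0.
Proof. unfold clmul, clneg, clscale, i2, e0; simpl; f_equal; ring. Qed.
Lemma i3_sq : clmul i3 i3 = clneg e0.
Proof. unfold clmul, clneg, clscale, i3, e0; simpl; f_equal; ring. Qed.
Lemma i1i2_anti : clmul i1 i2 = clneg (clmul i2 i1).
Proof. unfold clmul, clneg, clscale, i1, i2; simpl; f_equal; ring. Qed.
Lemma i1i3_anti : clmul i1 i3 = clneg (clmul i3 i1).
Proof. unfold clmul, clneg, clscale, i1, i3; simpl; f_equal; ring. Qed.
Lemma i2i3_anti : clmul i2 i3 = clneg (clmul i3 i2).
Proof. unfold clmul, clneg, clscale, i2, i3; simpl; f_equal; ring. Qed.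
Lemma e3_def : clmul i1 i2 = mkCl 0 0 0 1 0 0 0 0.
Proof. unfold clmul, i1, i2; simpl; f_equal; ring. Qed.
Lemma e5_def : clmul i1 i3 = mkCl 0 0 0 0 0 1 0 0.
Proof. unfold clmul, i1, i3; simpl; f_equal; ring. Qed.
Lemma e6_def : clmul i2 i3 = mkCl 0 0 0 0 0 0 1 0.
Proof. unfold clmul, i2, i3; simpl; f_equal; ring. Qed.
Lemma e7_def : clmul (clmul i1 i2) i3 = e7.
Proof. unfold clmul, i1, i2, i3, e7; simpl; f_equal; ring. Qed.
Lemma clmul_assoc x y z : clmul (clmul x y) z = clmul x (clmul y z).
Proof. destruct x, y, z; unfold clmul; simpl; f_equal; ring. Qed.
Lemma e7_central x : clmul e7 x = clmul x e7.
Proof. destruct x; unfold clmul, e7; simpl; f_equal; ring. Qed.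

Definition Cre (a : Cl12) : Cl12 := mkCl a.(c0) 0 0 0 0 0 0 a.(c7).

Definition Nf (a : Cl12) : R :=
  a.(c0)^2 - a.(c1)^2 + a.(c2)^2 - a.(c3)^2 + a.(c4)^2 - a.(c5)^2
  + a.(c6)^2 - a.(c7)^2.

Definition Tf (a : Cl12) : R :=
  a.(c0) * a.(c7) + a.(c2) * a.(c5) - a.(c1) * a.(c6) - a.(c3) * a.(c4).

Definition Pf (a : Cl12) : R := (Nf a)^2 + 4 * (Tf a)^2.

Definition inZ (a : Cl12) : Prop := Pf a = 0.

Definition in_center (a : Cl12) : Prop :=
  exists r s : R, a = cladd (clscale r e0) (clscale s e7).

Definition similar (a b : Cl12) : Prop :=
  exists q : Cl12, ~ inZ q /\ clmul q a = clmul b q.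

(* The centre R + R e7 is a copy of C (e7^2 = -1) and Cl12 is M_2(C).
   Clifford conjugation gives x * conj x = N x + 2 T x e7, a multiplicative
   complex norm of squared modulus P, so P x <> 0 makes x invertible; this
   norm and Cre both satisfy f (x y) = f (y x), hence are similarity
   invariants.  Conversely, write a = s + u with s = Cre a central: every
   q = v x + x u satisfies q a = (s + v) q as soon as u^2 = v^2, and u^2 only
   depends on Cre a, N a and T a.  So a is similar to a companion form built
   from these invariants, with a conjugator taken from a two-parameter family
   that contains an invertible element unless a is central. *)
From Stdlib Require Import Reals Lra Psatz.
Open Scope R_scope.

Definition central (r s : R) : Cl12 := mkCl r 0 0 0 0 0 0 s.

Definition pure (a : Cl12) : Cl12 :=
  mkCl 0 a.(c1) a.(c2) a.(c3) a.(c4) a.(c5) a.(c6) 0.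

Definition clconj (x : Cl12) : Cl12 :=
  mkCl x.(c0) (- x.(c1)) (- x.(c2)) (- x.(c3)) (- x.(c4)) (- x.(c5)) (- x.(c6)) x.(c7).

Definition cnorm (x : Cl12) : Cl12 := central (Nf x) (2 * Tf x).

(* x * conj x = cnorm x, and cnorm x times its complex conjugate
   N x - 2 T x e7 is P x. *)
Definition clinv (x : Cl12) : Cl12 :=
  clscale (/ Pf x) (clmul (clconj x) (central (Nf x) (-2 * Tf x))).

Ltac cl_ring := unfold clmul, cladd, clscale, central; simpl; f_equal; ring.

Lemma cladd_comm x y : cladd x y = cladd y x.
Proof. destruct x, y; unfold cladd; simpl; f_equal; ring. Qed.

Lemma clmul_addl x y z : clmul (cladd x y) z = cladd (clmul x z) (clmul y z).
Proof. destruct x, y, z; cl_ring. Qed.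

Lemma clmul_addr x y z : clmul x (cladd y z) = cladd (clmul x y) (clmul x z).
Proof. destruct x, y, z; cl_ring. Qed.

Lemma clmul_scalel r x y : clmul (clscale r x) y = clscale r (clmul x y).
Proof. destruct x, y; cl_ring. Qed.

Lemma clmul_scaler r x y : clmul x (clscale r y) = clscale r (clmul x y).
Proof. destruct x, y; cl_ring. Qed.

Lemma clmul1l x : clmul e0 x = x.
Proof. destruct x; unfold e0; cl_ring. Qed.

Lemma clmul1r x : clmul x e0 = x.
Proof. destruct x; unfold e0; cl_ring. Qed.

Lemma central_comm r s x : clmul (central r s) x = clmul x (central r s).
Proof. destruct x; cl_ring. Qed.

Lemma Nf_mul x y : Nf (clmul x y) = Nf x * Nf y - 4 * Tf x * Tf y.
Proof. destruct x, y; unfold clmul, Nf, Tf; simpl; ring. Qed.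

Lemma Tf_mul x y : Tf (clmul x y) = Nf x * Tf y + Tf x * Nf y.
Proof. destruct x, y; unfold clmul, Nf, Tf; simpl; ring. Qed.

Lemma Pf_mul x y : Pf (clmul x y) = Pf x * Pf y.
Proof. unfold Pf; rewrite Nf_mul, Tf_mul; ring. Qed.

Lemma Pf_e0 : Pf e0 = 1.
Proof. unfold Pf, Nf, Tf, e0; simpl; ring. Qed.

Lemma mul_clconj x : clmul x (clconj x) = cnorm x.
Proof. destruct x; unfold clconj, cnorm, Nf, Tf; cl_ring. Qed.

Lemma clconj_mul x : clmul (clconj x) x = cnorm x.
Proof. destruct x; unfold clconj, cnorm, Nf, Tf; cl_ring. Qed.

Lemma cnorm_mul_cnorm_bar x :
  clmul (cnorm x) (central (Nf x) (-2 * Tf x)) = clscale (Pf x) e0.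
Proof. unfold cnorm, Pf, e0; cl_ring. Qed.

Lemma clscale_inv_e0 p : p <> 0 -> clscale (/ p) (clscale p e0) = e0.
Proof. intro Hp; unfold clscale, e0; simpl; f_equal; field; exact Hp. Qed.

Lemma mul_clinv x : Pf x <> 0 -> clmul x (clinv x) = e0.
Proof.
  intro Hx; unfold clinv.
  rewrite clmul_scaler, <- clmul_assoc, mul_clconj, cnorm_mul_cnorm_bar.
  exact (clscale_inv_e0 _ Hx).
Qed.

Lemma clinv_mul x : Pf x <> 0 -> clmul (clinv x) x = e0.
Proof.
  intro Hx; unfold clinv.
  rewrite clmul_scalel, clmul_assoc, central_comm, <- clmul_assoc,
    clconj_mul, cnorm_mul_cnorm_bar.
  exact (clscale_inv_e0 _ Hx).
Qed.

Lemma Pf_clinv_neq0 x : Pf x <> 0 -> Pf (clinv x) <> 0.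
Proof.
  intros Hx H0.
  assert (H1 := f_equal Pf (clinv_mul x Hx)).
  rewrite Pf_mul, H0, Pf_e0 in H1; lra.
Qed.

Lemma similar_sym a b : similar a b -> similar b a.
Proof.
  intros [q [Hq E]]; unfold inZ in Hq.
  exists (clinv q); split; [exact (Pf_clinv_neq0 q Hq) |].
  rewrite <- (clmul1r (clmul (clinv q) b)), <- (mul_clinv q Hq),
    <- !clmul_assoc, (clmul_assoc (clinv q) b q), <- E,
    <- clmul_assoc, clinv_mul, clmul1l by exact Hq.
  reflexivity.
Qed.

Lemma similar_trans a b c : similar a b -> similar b c -> similar a c.
Proof.
  intros [q [Hq Eq]] [r [Hr Er]].
  exists (clmul r q); split.
  - unfold inZ in *; rewrite Pf_mul; intro H.
    apply Rmult_integral in H; tauto.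
  - rewrite clmul_assoc, Eq, <- clmul_assoc, Er, clmul_assoc; reflexivity.
Qed.

Lemma similar_invariant {A : Type} (f : Cl12 -> A) a b :
  (forall x y, f (clmul x y) = f (clmul y x)) -> similar a b -> f a = f b.
Proof.
  intros f_mulC [q [Hq E]]; unfold inZ in Hq.
  assert (Eb : b = clmul q (clmul a (clinv q))).
  { rewrite <- (clmul1r b), <- (mul_clinv q Hq), <- clmul_assoc, <- E,
      clmul_assoc; reflexivity. }
  rewrite Eb, f_mulC, clmul_assoc, clinv_mul, clmul1r by exact Hq.
  reflexivity.
Qed.

Lemma Cre_mulC x y : Cre (clmul x y) = Cre (clmul y x).
Proof. destruct x, y; unfold clmul, Cre; simpl; f_equal; ring. Qed.

Lemma cnorm_mulC x y : cnorm (clmul x y) = cnorm (clmul y x).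
Proof. unfold cnorm; rewrite !Nf_mul, !Tf_mul; f_equal; ring. Qed.

Definition intertwiner (u v x : Cl12) : Cl12 := cladd (clmul v x) (clmul x u).

Lemma intertwiner_mul u v x r s :
  clmul u u = central r s -> clmul v v = central r s ->
  clmul (intertwiner u v x) u = clmul v (intertwiner u v x).
Proof.
  intros Hu Hv; unfold intertwiner.
  rewrite clmul_addl, clmul_addr, !clmul_assoc, Hu, <- (clmul_assoc v v x), Hv,
    central_comm.
  apply cladd_comm.
Qed.

Lemma intertwiner_add_central u v x r s r' s' :
  clmul u u = central r s -> clmul v v = central r s ->
  clmul (intertwiner u v x) (cladd (central r' s') u)
  = clmul (cladd (central r' s') v) (intertwiner u v x).
Proof.
  intros Hu Hv.
  rewrite clmul_addr, clmul_addl, (intertwiner_mul _ _ _ _ _ Hu Hv), central_comm.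
  reflexivity.
Qed.

Lemma Cre_add_pure a : a = cladd (Cre a) (pure a).
Proof. destruct a; unfold cladd, Cre, pure; simpl; f_equal; ring. Qed.

(* u^2 = s^2 - n for a = s + u, with s = Cre a and n = a * conj a. *)
Lemma pure_sq a :
  clmul (pure a) (pure a)
  = central (a.(c0)^2 - a.(c7)^2 - Nf a) (2 * (a.(c0) * a.(c7) - Tf a)).
Proof. destruct a; unfold pure, Nf, Tf; cl_ring. Qed.

Lemma intertwiner_pure a b x :
  Cre a = Cre b -> Nf a = Nf b -> Tf a = Tf b ->
  clmul (intertwiner (pure a) (pure b) x) a
  = clmul b (intertwiner (pure a) (pure b) x).
Proof.
  intros HC HN HT.
  assert (H0 := f_equal c0 HC); assert (H7 := f_equal c7 HC); simpl in H0, H7.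
  assert (Hb := pure_sq b); rewrite <- H0, <- H7, <- HN, <- HT in Hb.
  pose proof (intertwiner_add_central _ _ x _ _ a.(c0) a.(c7) (pure_sq a) Hb) as E.
  change (central a.(c0) a.(c7)) with (Cre a) in E.
  rewrite <- Cre_add_pure, HC, <- Cre_add_pure in E; exact E.
Qed.

(* s (1 - i1) - ((1 - i1) + n (1 + i1)) i2 / 2 with s = Cre a and
   n = N a + 2 T a e7: the companion matrix of X^2 - 2 s X + n, which a
   annihilates, under Cl12 = M_2(C). *)
Definition companion (a : Cl12) : Cl12 :=
  mkCl a.(c0) (- a.(c0)) (- (Nf a + 1) / 2) ((1 - Nf a) / 2)
       (- Tf a) (- Tf a) (- a.(c7)) a.(c7).

Lemma Cre_companion a : Cre (companion a) = Cre a.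
Proof. reflexivity. Qed.

Lemma Nf_companion a : Nf (companion a) = Nf a.
Proof. unfold Nf at 1; simpl; field. Qed.

Lemma Tf_companion a : Tf (companion a) = Tf a.
Proof. unfold Tf at 1; simpl; field. Qed.

Lemma companion_invariant a b :
  Cre a = Cre b -> Nf a = Nf b -> Tf a = Tf b -> companion a = companion b.
Proof.
  intros HC HN HT.
  assert (H0 := f_equal c0 HC); assert (H7 := f_equal c7 HC); simpl in H0, H7.
  unfold companion; rewrite H0, H7, HN, HT; reflexivity.
Qed.

Definition companion_intertwiner (a x : Cl12) : Cl12 :=
  intertwiner (pure a) (pure (companion a)) x.

(* For x = p (1 + i1) + q (1 + i1) i2 in the right ideal (1 + i1) Cl12, the
   N- and T-terms of the companion form cancel and the intertwiner is affine
   in a. *)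
Lemma companion_intertwiner_ideal a p q :
  companion_intertwiner a (mkCl p p q q 0 0 0 0)
  = mkCl (p * (a.(c1) - a.(c0)) + q * (a.(c3) - a.(c2) + 1))
         (p * (a.(c1) - a.(c0)) + q * (a.(c3) - a.(c2) - 1))
         (p * (a.(c2) + a.(c3) - 1) - q * (a.(c0) + a.(c1)))
         (p * (a.(c2) + a.(c3) + 1) - q * (a.(c0) + a.(c1)))
         (p * (a.(c4) + a.(c5)) - q * (a.(c6) + a.(c7)))
         (p * (a.(c4) + a.(c5)) - q * (a.(c6) + a.(c7)))
         (p * (a.(c6) - a.(c7)) + q * (a.(c4) - a.(c5)))
         (p * (a.(c6) - a.(c7)) + q * (a.(c4) - a.(c5))).
Proof.
  destruct a; unfold companion_intertwiner, intertwiner, companion, pure, Nf, Tf,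
    clmul, cladd; simpl; f_equal; field.
Qed.

Lemma companion_intertwiner_invertible a :
  ~ in_center a ->
  exists p q, Pf (companion_intertwiner a (mkCl p p q q 0 0 0 0)) <> 0.
Proof.
  intro Ha.
  destruct (Req_dec (Pf (companion_intertwiner a (mkCl 1 1 0 0 0 0 0 0))) 0) as [H1 | H1];
    [| eauto].
  destruct (Req_dec (Pf (companion_intertwiner a (mkCl 0 0 1 1 0 0 0 0))) 0) as [H2 | H2];
    [| eauto].
  destruct (Req_dec (Pf (companion_intertwiner a (mkCl (-1) (-1) 1 1 0 0 0 0))) 0)
    as [H3 | H3]; [| eauto].
  exfalso; apply Ha.
  rewrite companion_intertwiner_ideal in H1, H2, H3.
  destruct a as [a0 a1 a2 a3 a4 a5 a6 a7]; unfold Pf, Nf, Tf in H1, H2, H3; simpl in *.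
  assert (S1 : (a2 + a3)² + (a4 + a5)² = 0) by (unfold Rsqr; nra).
  assert (S2 : (a3 - a2)² + (a4 - a5)² = 0) by (unfold Rsqr; nra).
  assert (S3 : (a1 + a2)² + (a5 + a6)² = 0) by (unfold Rsqr; nra).
  apply Rplus_sqr_eq_0 in S1, S2, S3.
  exists a0, a7; unfold cladd, clscale, e0, e7; simpl; f_equal; lra.
Qed.

Lemma similar_companion a : ~ in_center a -> similar a (companion a).
Proof.
  intro Ha.
  destruct (companion_intertwiner_invertible a Ha) as [p [q Hpq]].
  exists (companion_intertwiner a (mkCl p p q q 0 0 0 0)); split; [exact Hpq |].
  apply intertwiner_pure;
    [symmetry; apply Cre_companion | symmetry; apply Nf_companion
    | symmetry; apply Tf_companion].
Qed.

Theorem theorem5p1 (a b : Cl12) :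
  ~ in_center a -> ~ in_center b ->
  (similar a b <-> (Cre a = Cre b /\ Nf a = Nf b /\ Tf a = Tf b)).
Proof.
  intros Ha Hb; split.
  - intro Hab.
    assert (HN := similar_invariant cnorm a b cnorm_mulC Hab).
    unfold cnorm, central in HN; injection HN as HN HT.
    repeat split; [exact (similar_invariant Cre a b Cre_mulC Hab) | exact HN | lra].
  - intros [HC [HN HT]].
    apply similar_trans with (companion a); [exact (similar_companion a Ha) |].
    rewrite (companion_invariant a b HC HN HT).
    exact (similar_sym _ _ (similar_companion b Hb)).
Qed.
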